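(* Let $m,n$ be positive integers with at least one of $m,n$ greater than $1$. The pseudograph $\mathcal{K}_{m,n}$ admits a cylindrical knight's tour if and only if neither of the following holds: (i) $m=2$ and $n=2$; (ii) $m$ is odd and $n$ is even.
   Context: Let $\mathcal{P}$ be the graph with vertex set $\mathbb{Z}^2$ in which $(a,b)$ and $(a',b')$ are adjacent iff $\{|a-a'|,|b-b'|\}=\{1,2\}$. For positive integers $m,n$ let $G$ be the group of automorphisms of $\mathcal{P}$ generated by $\tau(a,b)=(a+m,b)$ and $\sigma(a,b)=(m-1-a,\,b+n)$; it acts freely, and the knight's pseudograph of the $m\times n$ Klein bottle board is $\mathcal{K}_{m,n}=\mathcal{P}/G$ (vertices and edges are orbits; multiple edges and loops may occur), with covering map $\phi_K:\mathcal{P}\to\mathcal{K}_{m,n}$. A knight's tour is a closed walk visiting every vertex exactly once apart from the repeated start/end vertex (a Hamiltonian cycle). Regard a tour as a closed walk starting and ending at vertex $(0,0)$; it lifts uniquely to a walk in $\mathcal{P}$ starting at $(0,0)$. The tour is cylindrical if this lift ends at $(m,0)$ or $(-m,0)$ (equivalently, its homotopy class is the image of a generator of the fundamental group of the cylinder obtained by identifying only the left and right sides of the board). *)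

From Stdlib Require Import ZArith Relations Arith.
Open Scope Z_scope.

Definition knight_adj (p q : Z * Z) : Prop :=
  let da := Z.abs (fst p - fst q) in
  let db := Z.abs (snd p - snd q) in
  (da = 1 /\ db = 2) \/ (da = 2 /\ db = 1).

Definition tau (m : Z) (p : Z * Z) : Z * Z := (fst p + m, snd p).
Definition sigma (m n : Z) (p : Z * Z) : Z * Z := (m - 1 - fst p, snd p + n).

(* p and q lie in the same G-orbit, G = <tau, sigma>: the equivalence
   closure of the generator steps.  Vertices of K_{m,n} are these orbits,
   and phi_K p = phi_K q iff same_orbit m n p q. *)
Definition gen_step (m n : Z) (p q : Z * Z) : Prop :=
  q = tau m p \/ q = sigma m n p.

Definition same_orbit (m n : Z) : relation (Z * Z) :=
  clos_refl_sym_trans (Z * Z) (gen_step m n).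

(* A knight's tour of K_{m,n}, regarded as a closed walk from the vertex
   phi_K(0,0), given through its unique lift w to P starting at (0,0):
   w 0, ..., w (m*n) is a walk in P; the projected closed walk has length
   m*n (= number of vertices of K_{m,n}); its first m*n vertices are pairwise
   distinct and cover every vertex; it returns to its start. *)
Definition tour_lift (m n : nat) (w : nat -> Z * Z) : Prop :=
  let mZ := Z.of_nat m in
  let nZ := Z.of_nat n in
  let N := (m * n)%nat in
  w 0%nat = (0, 0) /\
  (forall i, (i < N)%nat -> knight_adj (w i) (w (S i))) /\
  (forall i j, (i < N)%nat -> (j < N)%nat ->
      same_orbit mZ nZ (w i) (w j) -> i = j) /\
  (forall q, exists i, (i < N)%nat /\ same_orbit mZ nZ q (w i)) /\
  same_orbit mZ nZ (w N) (w 0%nat).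

Definition has_cylindrical_tour (m n : nat) : Prop :=
  exists w : nat -> Z * Z,
    tour_lift m n w /\
    (w (m * n)%nat = (Z.of_nat m, 0) \/ w (m * n)%nat = (- Z.of_nat m, 0)).

From Stdlib Require Import ZArith Relations Arith Lia List FinFun.
Import ListNotations.
Open Scope Z_scope.

(* Two invariants rule out the exceptional boards.  A knight move changes the
   parity of x + y, so after m*n moves the lift cannot end at (+-m, 0) when m is
   odd and n even.  On K_{2,2} every (1,2)-move joins two points of the same
   orbit, so a tour consists of four (2,1)-moves and its lift ends at a multiple
   of 4 columns, never at (+-2, 0).

   Conversely, the orbit of (a, b) is determined by b mod n together with the
   column a, replaced by -1 - a on the sheets where floor(b/n) is odd, taken mod m.
   Hence a walk from (0,0) to (m,0) whose first m*n points have pairwise distinct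
   invariants is a cylindrical tour (the covering property is pigeonhole).  K
   copies of a tour of K_{s,n} ending at (s,0), placed side by side, form such a
   walk for K_{Ks,n}; so it suffices to exhibit tours of K_{1,n} (n odd >= 3),
   K_{2,n} (n >= 3), K_{2,1}, K_{4,2}, K_{m,1} (m odd >= 3) and K_{4k+6,2}. *)

(** * Orbit invariants *)

Definition klein_sign (n b : Z) : Z := if Z.even (b / n) then 1 else -1.

Definition klein_col (n : Z) (p : Z * Z) : Z :=
  if Z.even (snd p / n) then fst p else -1 - fst p.

Definition orbit_code (m n : Z) (p : Z * Z) : Z * Z :=
  (klein_col n p mod m, snd p mod n).

Lemma klein_sign_cases n b : klein_sign n b = 1 \/ klein_sign n b = -1.
Proof. unfold klein_sign; destruct (Z.even (b / n)); auto. Qed.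

Lemma klein_col_shift n a b c :
  klein_col n (a + c, b) = klein_col n (a, b) + klein_sign n b * c.
Proof. unfold klein_col, klein_sign; cbn [fst snd]; destruct (Z.even (b / n)); ring. Qed.

Lemma klein_col_flip n a b : 0 < n ->
  klein_col n (-1 - a, b + n) = klein_col n (a, b).
Proof.
  intros Hn; unfold klein_col; cbn [fst snd].
  replace (b + n) with (b + 1 * n) by ring.
  rewrite Z.div_add, Z.even_add by lia; destruct (Z.even (b / n)); cbn -[Z.sub]; ring.
Qed.

Section Orbits.
Variables m n : Z.
Hypotheses (Hm : 0 < m) (Hn : 0 < n).

Lemma orbit_code_tau p : orbit_code m n (tau m p) = orbit_code m n p.
Proof.
  destruct p as [a b]; unfold orbit_code, tau; cbn [fst snd].
  rewrite klein_col_shift, Z.mod_add by lia; reflexivity.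
Qed.

Lemma orbit_code_sigma p : orbit_code m n (sigma m n p) = orbit_code m n p.
Proof.
  destruct p as [a b]; unfold orbit_code, sigma; cbn [fst snd].
  replace (m - 1 - a) with (-1 - a + m) by ring.
  rewrite klein_col_shift, klein_col_flip, Z.mod_add by lia.
  replace (b + n) with (b + 1 * n) by ring.
  rewrite Z.mod_add by lia; reflexivity.
Qed.

Lemma same_orbit_code p q :
  same_orbit m n p q -> orbit_code m n p = orbit_code m n q.
Proof.
  induction 1 as [p q [-> | ->] | | |]; try congruence.
  - now rewrite orbit_code_tau.
  - now rewrite orbit_code_sigma.
Qed.

Lemma same_orbit_tau_pow a b k : same_orbit m n (a, b) (a + k * m, b).
Proof.
  induction k as [| k IH | k IH] using Z.peano_ind.
  - rewrite Z.add_0_r; apply rst_refl.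
  - apply rst_trans with (1 := IH), rst_step; left.
    unfold tau; cbn [fst snd]; f_equal; lia.
  - apply rst_trans with (1 := IH), rst_sym, rst_step; left.
    unfold tau; cbn [fst snd]; f_equal; lia.
Qed.

Lemma same_orbit_flip a b : same_orbit m n (a, b) (-1 - a, b + n).
Proof.
  apply rst_trans with (y := sigma m n (a, b)); [now apply rst_step; right |].
  apply rst_sym; replace (sigma m n (a, b)) with (-1 - a + 1 * m, b + n)
    by (unfold sigma; cbn [fst snd]; f_equal; ring).
  apply same_orbit_tau_pow.
Qed.

Lemma same_orbit_unfold a r k : 0 <= r < n ->
  same_orbit m n (a, r + k * n) (klein_col n (a, r + k * n), r).
Proof.
  intros Hr; revert a; induction k as [| k IH | k IH] using Z.peano_ind; intros a.
  - rewrite Z.add_0_r; unfold klein_col; cbn [fst snd].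
    rewrite Z.div_small by lia; apply rst_refl.
  - replace (r + Z.succ k * n) with (r + k * n + n) by lia.
    replace a with (-1 - (-1 - a)) by ring; rewrite klein_col_flip by lia.
    apply rst_trans with (2 := IH (-1 - a)), rst_sym, same_orbit_flip.
  - rewrite <- klein_col_flip by lia.
    replace (r + Z.pred k * n + n) with (r + k * n) by lia.
    apply rst_trans with (2 := IH (-1 - a)).
    replace (r + k * n) with (r + Z.pred k * n + n) by lia; apply same_orbit_flip.
Qed.

Lemma same_orbit_code_point p : same_orbit m n p (orbit_code m n p).
Proof.
  destruct p as [a b]; unfold orbit_code; cbn [snd].
  assert (Hb : b = b mod n + b / n * n)
    by (rewrite Z.add_comm, Z.mul_comm; apply Z.div_mod; lia).
  rewrite Hb at 1 2.
  apply rst_trans with (1 := same_orbit_unfold a _ _ (Z.mod_pos_bound b n Hn)).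
  set (x := klein_col _ _).
  replace (x mod m) with (x + - (x / m) * m) by (rewrite Z.mod_eq by lia; ring).
  apply same_orbit_tau_pow.
Qed.

Lemma same_orbit_iff_code p q :
  same_orbit m n p q <-> orbit_code m n p = orbit_code m n q.
Proof.
  split; [apply same_orbit_code |]; intros E.
  apply rst_trans with (1 := same_orbit_code_point p).
  rewrite E; apply rst_sym, same_orbit_code_point.
Qed.

Lemma orbit_code_bounds p :
  0 <= fst (orbit_code m n p) < m /\ 0 <= snd (orbit_code m n p) < n.
Proof. split; apply Z.mod_pos_bound; assumption. Qed.

Definition code_index (p : Z * Z) : nat :=
  Z.to_nat (snd (orbit_code m n p) * m + fst (orbit_code m n p)).

Lemma code_index_lt p : (code_index p < Z.to_nat (m * n))%nat.
Proof. unfold code_index; pose proof (orbit_code_bounds p); nia. Qed.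

Lemma code_index_inj p q :
  code_index p = code_index q -> orbit_code m n p = orbit_code m n q.
Proof.
  unfold code_index; pose proof (orbit_code_bounds p); pose proof (orbit_code_bounds q).
  destruct (orbit_code m n p) as [x y], (orbit_code m n q) as [x' y']; cbn [fst snd] in *.
  intros E; assert (y = y') by nia; f_equal; nia.
Qed.

End Orbits.

(** * Tours from injective walks *)

Definition has_right_tour (m n : nat) : Prop :=
  exists w, tour_lift m n w /\ w (m * n)%nat = (Z.of_nat m, 0).

Lemma injective_codes_cover (m n : nat) (w : nat -> Z * Z) :
  let code := orbit_code (Z.of_nat m) (Z.of_nat n) in
  (0 < m)%nat -> (0 < n)%nat ->
  (forall i j, (i < m * n)%nat -> (j < m * n)%nat -> code (w i) = code (w j) -> i = j) ->
  forall p, exists i, (i < m * n)%nat /\ code p = code (w i).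
Proof.
  intros code Hm Hn Hinj p.
  set (mZ := Z.of_nat m) in *; set (nZ := Z.of_nat n) in *.
  assert (HN : Z.to_nat (mZ * nZ) = (m * n)%nat) by lia.
  assert (Hsurj : bSurjective (m * n) (fun i => code_index mZ nZ (w i))).
  { apply bInjective_bSurjective.
    - intros i _; rewrite <- HN; apply code_index_lt; lia.
    - intros i j Hi Hj E; apply Hinj; trivial.
      apply code_index_inj; trivial; lia. }
  destruct (Hsurj (code_index mZ nZ p)) as [i [Hi Ei]].
  { rewrite <- HN; apply code_index_lt; lia. }
  exists i; split; trivial.
  symmetry; apply code_index_inj; trivial; lia.
Qed.

Lemma has_right_tour_intro (m n : nat) (w : nat -> Z * Z) :
  (0 < m)%nat -> (0 < n)%nat -> w 0%nat = (0, 0) ->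
  (forall i, (i < m * n)%nat -> knight_adj (w i) (w (S i))) ->
  (forall i j, (i < m * n)%nat -> (j < m * n)%nat ->
     orbit_code (Z.of_nat m) (Z.of_nat n) (w i) =
     orbit_code (Z.of_nat m) (Z.of_nat n) (w j) -> i = j) ->
  w (m * n)%nat = (Z.of_nat m, 0) ->
  has_right_tour m n.
Proof.
  intros Hm Hn H0 Hadj Hinj Hend; exists w; split; trivial.
  assert (HmZ : 0 < Z.of_nat m) by lia; assert (HnZ : 0 < Z.of_nat n) by lia.
  repeat split; trivial.
  - intros i j Hi Hj Ho; apply Hinj; trivial.
    now apply same_orbit_iff_code.
  - intros p; destruct (injective_codes_cover m n w Hm Hn Hinj p) as [i [Hi Ei]].
    exists i; split; trivial.
    now apply same_orbit_iff_code.
  - rewrite Hend, H0; apply rst_sym, rst_step; left; reflexivity.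
Qed.

Lemma has_right_tour_cylindrical m n :
  has_right_tour m n -> has_cylindrical_tour m n.
Proof. intros [w [Hw Hend]]; exists w; auto. Qed.

Lemma has_right_tour_of_list (m n : nat) (l : list (Z * Z)) :
  let last := (Z.of_nat m, 0) in
  (0 < m)%nat -> (0 < n)%nat -> length l = (m * n)%nat -> nth 0 l last = (0, 0) ->
  (forall i, (i < m * n)%nat -> knight_adj (nth i l last) (nth (S i) l last)) ->
  NoDup (map (orbit_code (Z.of_nat m) (Z.of_nat n)) l) ->
  has_right_tour m n.
Proof.
  intros last Hm Hn Hlen H0 Hadj Hnodup.
  apply has_right_tour_intro with (fun i => nth i l last); trivial.
  - intros i j Hi Hj E.
    apply (proj1 (NoDup_nth _ (orbit_code (Z.of_nat m) (Z.of_nat n) last)) Hnodup);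
      rewrite ?length_map, ?map_nth; congruence.
  - apply nth_overflow; lia.
Qed.

(** * Repeating a tour *)

Lemma knight_adj_shift a b a' b' c :
  knight_adj (a + c, b) (a' + c, b') <-> knight_adj (a, b) (a', b').
Proof.
  unfold knight_adj; cbn [fst snd].
  replace (a + c - (a' + c)) with (a - a') by ring; tauto.
Qed.

Lemma signed_multiple_mod_inj c e s K q q' :
  0 < s -> e = 1 \/ e = -1 -> 0 <= q < K -> 0 <= q' < K ->
  (c + e * (s * q)) mod (K * s) = (c + e * (s * q')) mod (K * s) -> q = q'.
Proof.
  intros Hs He Hq Hq' [t Et]%Z.cong_iff_ex.
  assert (e * (q - q') = t * K) by nia.
  destruct (Z.lt_trichotomy t 0) as [Ht | [Ht | Ht]]; destruct He; subst; nia.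
Qed.

Section Repetition.
Variables (s n K : nat) (w : nat -> Z * Z).
Hypotheses (Hs : (0 < s)%nat) (Hn : (0 < n)%nat) (HK : (0 < K)%nat)
  (Hw : tour_lift s n w) (Hend : w (s * n)%nat = (Z.of_nat s, 0)).

Let P := (s * n)%nat.

Definition repeat_walk (i : nat) : Z * Z :=
  (Z.of_nat s * Z.of_nat (i / P) + fst (w (i mod P)), snd (w (i mod P))).

Lemma repeat_walk_block q j : (j <= P)%nat ->
  repeat_walk (P * q + j) = (fst (w j) + Z.of_nat s * Z.of_nat q, snd (w j)).
Proof.
  intros Hj; unfold repeat_walk.
  destruct (Nat.eq_dec j P) as [-> | Hj'].
  - replace (P * q + P)%nat with ((q + 1) * P)%nat by lia.
    rewrite Nat.div_mul, Nat.Div0.mod_mul by (unfold P; lia).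
    destruct Hw as [H0 _]; unfold P; rewrite Hend, H0; cbn [fst snd]; f_equal; lia.
  - assert (Hq : ((P * q + j) / P = q)%nat)
      by (symmetry; apply (Nat.div_unique _ _ _ j); lia).
    assert (Hr : ((P * q + j) mod P = j)%nat)
      by (symmetry; apply (Nat.mod_unique _ _ q); lia).
    rewrite Hq, Hr; cbn [fst snd]; f_equal; ring.
Qed.

Lemma repeat_walk_decomp i : i = (P * (i / P) + i mod P)%nat /\ (i mod P < P)%nat.
Proof. split; [apply Nat.div_mod | apply Nat.mod_upper_bound]; unfold P; lia. Qed.

Lemma repeat_walk_code_inj i i' :
  (i < K * s * n)%nat -> (i' < K * s * n)%nat ->
  orbit_code (Z.of_nat (K * s)) (Z.of_nat n) (repeat_walk i) =
  orbit_code (Z.of_nat (K * s)) (Z.of_nat n) (repeat_walk i') -> i = i'.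
Proof.
  destruct Hw as [_ [_ [Hdist _]]].
  destruct (repeat_walk_decomp i) as [Ei Hj], (repeat_walk_decomp i') as [Ei' Hj'].
  set (q := (i / P)%nat) in *; set (j := (i mod P)%nat) in *.
  set (q' := (i' / P)%nat) in *; set (j' := (i' mod P)%nat) in *.
  intros Hi Hi'; assert (Hq : (q < K)%nat) by (unfold q, P; apply Nat.Div0.div_lt_upper_bound; lia).
  assert (Hq' : (q' < K)%nat) by (unfold q', P; apply Nat.Div0.div_lt_upper_bound; lia).
  rewrite Ei, Ei', !repeat_walk_block by lia.
  unfold orbit_code; cbn [fst snd]; rewrite !klein_col_shift, <- !surjective_pairing.
  rewrite Nat2Z.inj_mul; intros [=Ex Ey].
  (* Mod s the shift disappears, which identifies the position j in the block;
     the copy q is then read off mod K*s. *)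
  assert (Ejj : j = j').
  { apply Hdist; try (unfold P in *; lia).
    apply same_orbit_iff_code; try lia; unfold orbit_code; f_equal; trivial.
    apply (f_equal (fun x => x mod Z.of_nat s)) in Ex.
    rewrite !Z.mod_mod_divide in Ex by apply Z.divide_factor_r.
    rewrite !(Z.mul_comm (Z.of_nat s)), !Z.mul_assoc, !Z.mod_add in Ex by lia.
    exact Ex. }
  rewrite <- Ejj in Ex; apply signed_multiple_mod_inj in Ex; try lia.
  apply klein_sign_cases.
Qed.

Lemma repeat_walk_right_tour : has_right_tour (K * s) n.
Proof.
  destruct Hw as [H0 [Hadj _]].
  apply (has_right_tour_intro _ _ repeat_walk); try lia.
  - unfold repeat_walk; rewrite Nat.Div0.div_0_l, Nat.Div0.mod_0_l, H0; cbn [fst snd]; f_equal; lia.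
  - intros i _; destruct (repeat_walk_decomp i) as [Ei Hj]; rewrite Ei.
    rewrite <- Nat.add_succ_r, !repeat_walk_block by lia.
    apply knight_adj_shift; rewrite <- !surjective_pairing; apply Hadj, Hj.
  - exact repeat_walk_code_inj.
  - replace (K * s * n)%nat with (P * K + 0)%nat by (unfold P; lia).
    rewrite repeat_walk_block, H0 by lia; cbn [fst snd]; f_equal; lia.
Qed.

End Repetition.

Lemma has_right_tour_repeat s n K : (0 < s)%nat -> (0 < n)%nat -> (0 < K)%nat ->
  has_right_tour s n -> has_right_tour (K * s) n.
Proof. intros Hs Hn HK [w [Hw Hend]]; exact (repeat_walk_right_tour s n K w Hs Hn HK Hw Hend). Qed.

(** * Base tours *)

Definition zigzag_walk (h j : nat) : Z * Z :=
  if (j <=? h)%nat then (Z.of_nat j, 2 * Z.of_nat j)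
  else if (j <=? 2 * h)%nat
  then (2 * Z.of_nat h + 3 - Z.of_nat j, 4 * Z.of_nat h + 1 - 2 * Z.of_nat j)
  else (1, 0).

Lemma has_right_tour_1_odd h : (0 < h)%nat -> has_right_tour 1 (2 * h + 1).
Proof.
  intros Hh; apply has_right_tour_intro with (zigzag_walk h); try lia.
  - reflexivity.
  - intros j Hj; unfold zigzag_walk, knight_adj.
    destruct (Nat.leb_spec j h), (Nat.leb_spec (S j) h),
      (Nat.leb_spec j (2 * h)), (Nat.leb_spec (S j) (2 * h)); cbn [fst snd]; lia.
  - assert (Hrow : forall j, (j < 1 * (2 * h + 1))%nat ->
      snd (orbit_code 1 (Z.of_nat (2 * h + 1)) (zigzag_walk h j)) = snd (zigzag_walk h j)).
    { intros j Hj; apply Z.mod_small; unfold zigzag_walk.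
      destruct (Nat.leb_spec j h), (Nat.leb_spec j (2 * h)); cbn [snd]; lia. }
    intros j j' Hj Hj' E%(f_equal snd); rewrite !Hrow in E by assumption.
    revert E; unfold zigzag_walk.
    destruct (Nat.leb_spec j h), (Nat.leb_spec j' h),
      (Nat.leb_spec j (2 * h)), (Nat.leb_spec j' (2 * h)); cbn [snd]; lia.
  - unfold zigzag_walk.
    destruct (Nat.leb_spec (1 * (2 * h + 1)) h), (Nat.leb_spec (1 * (2 * h + 1)) (2 * h));
      try lia; reflexivity.
Qed.

Definition ladder_walk (n j : nat) : Z * Z :=
  if (j <=? n - 3)%nat then (if Nat.even j then 0 else 2, Z.of_nat j)
  else if (j <? 2 * n)%nat
  then (if Nat.even j then 3 else 1, 2 * Z.of_nat n - 3 - Z.of_nat j)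
  else (2, 0).

Lemma ladder_walk_code n j : (3 <= n)%nat -> (j < 2 * n)%nat ->
  orbit_code 2 (Z.of_nat n) (ladder_walk n j) =
  if (j <=? n - 3)%nat then (0, Z.of_nat j)
  else if (j <=? 2 * n - 3)%nat then (1, 2 * Z.of_nat n - 3 - Z.of_nat j)
  else (0, 3 * Z.of_nat n - 3 - Z.of_nat j).
Proof.
  intros Hn Hj; unfold ladder_walk, orbit_code, klein_col.
  destruct (Nat.leb_spec j (n - 3)), (Nat.ltb_spec j (2 * n)); try lia; cbn [fst snd].
  - rewrite Z.div_small, (Z.mod_small (Z.of_nat j)) by lia.
    destruct (Nat.even j); reflexivity.
  - destruct (Nat.leb_spec j (2 * n - 3)).
    + rewrite Z.div_small, (Z.mod_small (_ - _)) by lia.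
      destruct (Nat.even j); reflexivity.
    + rewrite <- (Z.div_unique _ _ (-1) (3 * Z.of_nat n - 3 - Z.of_nat j)) by lia.
      rewrite <- (Z.mod_unique _ (Z.of_nat n) (-1) (3 * Z.of_nat n - 3 - Z.of_nat j)) by lia.
      destruct (Nat.even j); reflexivity.
Qed.

Lemma even_succ_negb j : Nat.even (S j) = negb (Nat.even j).
Proof. rewrite Nat.even_succ, <- Nat.negb_even; reflexivity. Qed.

Lemma has_right_tour_2_n n : (3 <= n)%nat -> has_right_tour 2 n.
Proof.
  intros Hn; apply has_right_tour_intro with (ladder_walk n); try lia.
  - unfold ladder_walk; destruct (Nat.leb_spec 0 (n - 3)); [reflexivity | lia].
  - intros j Hj; unfold ladder_walk, knight_adj; rewrite even_succ_negb.
    destruct (Nat.leb_spec j (n - 3)), (Nat.leb_spec (S j) (n - 3)),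
      (Nat.ltb_spec j (2 * n)), (Nat.ltb_spec (S j) (2 * n));
      destruct (Nat.even j); cbn [fst snd negb]; lia.
  - intros j j' Hj Hj'; rewrite !ladder_walk_code by lia.
    destruct (Nat.leb_spec j (n - 3)), (Nat.leb_spec j' (n - 3)),
      (Nat.leb_spec j (2 * n - 3)), (Nat.leb_spec j' (2 * n - 3));
      intros E; apply pair_equal_spec in E; lia.
  - unfold ladder_walk.
    destruct (Nat.leb_spec (2 * n) (n - 3)), (Nat.ltb_spec (2 * n) (2 * n)); try lia; reflexivity.
Qed.

Lemma has_right_tour_2_1 : has_right_tour 2 1.
Proof.
  apply has_right_tour_of_list with [(0, 0); (1, 2)]; try lia; try reflexivity.
  - intros i Hi; do 2 (destruct i as [| i]; [unfold knight_adj; simpl; lia |]); lia.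
  - repeat constructor; simpl; intuition discriminate.
Qed.

Lemma has_right_tour_4_2 : has_right_tour 4 2.
Proof.
  apply has_right_tour_of_list
    with [(0, 0); (1, 2); (3, 3); (5, 4); (7, 5); (6, 3); (8, 2); (6, 1)];
    try lia; try reflexivity.
  - intros i Hi; do 8 (destruct i as [| i]; [unfold knight_adj; simpl; lia |]); lia.
  - vm_compute; repeat constructor; simpl; intuition discriminate.
Qed.

Definition crawl_walk (m i : nat) : Z * Z :=
  match i with
  | 0%nat => (0, 0)
  | 1%nat => (-1, 2)
  | _ => if (i <? m)%nat then (Z.of_nat i - 1, if Nat.even i then 1 else 3)
         else (Z.of_nat m, 0)
  end.

Lemma crawl_walk_col m i : (i < m)%nat -> klein_col 1 (crawl_walk m i) = - Z.of_nat i.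
Proof.
  intros Hi; destruct i as [| [| i]]; try reflexivity.
  unfold crawl_walk; destruct (Nat.ltb_spec (S (S i)) m); [| lia].
  unfold klein_col; destruct (Nat.even (S (S i))); cbn [fst snd]; rewrite Z.div_1_r;
    cbn [Z.even]; lia.
Qed.

Lemma has_right_tour_odd_1 h : has_right_tour (2 * h + 3) 1.
Proof.
  set (m := (2 * h + 3)%nat).
  apply has_right_tour_intro with (crawl_walk m); try lia; try reflexivity.
  - intros i Hi; destruct i as [| [| i]];
      [unfold knight_adj; simpl; lia | unfold crawl_walk, knight_adj | unfold crawl_walk].
    + destruct (Nat.ltb_spec 2 m); [cbn [fst snd Nat.even]; lia | lia].
    + rewrite (even_succ_negb (S (S i))).
      destruct (Nat.ltb_spec (S (S i)) m), (Nat.ltb_spec (S (S (S i))) m); try lia.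
      * destruct (Nat.even (S (S i))); unfold knight_adj; cbn [fst snd negb]; lia.
      * replace (S (S i)) with (2 * (h + 1))%nat by lia; rewrite Nat.even_mul.
        unfold knight_adj; cbn [fst snd Nat.even orb]; lia.
  - intros i j Hi Hj [= Ecol _]; rewrite Nat.mul_1_r in Hi, Hj.
    rewrite !crawl_walk_col in Ecol by assumption.
    apply Z.cong_iff_ex in Ecol as [t Et].
    destruct (Z.lt_trichotomy t 0) as [Ht | [Ht | Ht]]; nia.
  - unfold crawl_walk; rewrite Nat.mul_1_r; subst m.
    destruct (2 * h + 3)%nat as [| [| k]] eqn:E; try lia.
    destruct (Nat.ltb_spec (S (S k)) (S (S k))); [lia | reflexivity].
Qed.

(* The tour of K_{4k+6,2}: a head of 4 cells (t < 4), then k copies q of a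
   block of 8 cells shifted by 4q columns (4 <= t < 12), then a tail of 8 cells
   and the end point (12 <= t <= 20). *)
Definition strip_base (t : nat) : Z * Z :=
  nth t [(0, 0); (1, 2); (2, 4); (4, 5);
         (3, 3); (5, 4); (6, 6); (4, 7); (3, 5); (5, 6); (6, 4); (8, 5);
         (3, 3); (5, 4); (4, 2); (6, 1); (8, 2); (6, 3); (7, 1); (8, -1)] (6, 0).

Definition strip_cell (t q : nat) : Z * Z :=
  (fst (strip_base t) + 4 * Z.of_nat q, snd (strip_base t)).

Definition strip_slot (k t q : nat) : Prop :=
  ((t < 4 /\ q = 0) \/ (4 <= t < 12 /\ q < k) \/ (12 <= t <= 20 /\ q = k))%nat.

Definition strip_index (k t q : nat) : nat :=
  if (t <? 4)%nat then t
  else if (t <? 12)%nat then (4 + 8 * q + (t - 4))%nat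
  else (4 + 8 * k + (t - 12))%nat.

Definition strip_walk (k i : nat) : Z * Z :=
  if (i <? 4)%nat then strip_cell i 0
  else if (i <? 4 + 8 * k)%nat then strip_cell (4 + (i - 4) mod 8) ((i - 4) / 8)
  else strip_cell (12 + (i - 4 - 8 * k)) k.

Lemma strip_walk_slot k i : (i <= 8 * k + 12)%nat ->
  exists t q, strip_slot k t q /\ i = strip_index k t q /\ strip_walk k i = strip_cell t q.
Proof.
  intros Hi; unfold strip_walk, strip_slot, strip_index.
  destruct (Nat.ltb_spec i 4).
  - exists i, 0%nat; destruct (Nat.ltb_spec i 4); [| lia]; split; [lia | auto].
  - destruct (Nat.ltb_spec i (4 + 8 * k)).
    + pose proof (Nat.div_mod (i - 4) 8 ltac:(lia)).
      pose proof (Nat.mod_upper_bound (i - 4) 8 ltac:(lia)).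
      assert ((i - 4) / 8 < k)%nat by (apply Nat.Div0.div_lt_upper_bound; lia).
      exists (4 + (i - 4) mod 8)%nat, ((i - 4) / 8)%nat.
      destruct (Nat.ltb_spec (4 + (i - 4) mod 8) 4); [lia |].
      destruct (Nat.ltb_spec (4 + (i - 4) mod 8) 12); [| lia].
      split; [lia | split; [lia | auto]].
    + exists (12 + (i - 4 - 8 * k))%nat, k.
      destruct (Nat.ltb_spec (12 + (i - 4 - 8 * k)) 4); [lia |].
      destruct (Nat.ltb_spec (12 + (i - 4 - 8 * k)) 12); [lia |].
      split; [lia | split; [lia | auto]].
Qed.

Lemma strip_index_succ k t q t' q' : strip_slot k t q -> strip_slot k t' q' ->
  strip_index k t' q' = S (strip_index k t q) ->
  (t' = S t /\ q' = q /\ t <> 3%nat /\ t <> 11%nat) \/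
  (t = 3%nat /\ (t' = 4%nat \/ t' = 12%nat) /\ q' = 0%nat) \/
  (t = 11%nat /\ (t' = 4%nat \/ t' = 12%nat) /\ q' = S q).
Proof.
  unfold strip_slot, strip_index; intros H1 H2 E.
  destruct (Nat.ltb_spec t 4), (Nat.ltb_spec t 12), (Nat.ltb_spec t' 4), (Nat.ltb_spec t' 12);
    lia.
Qed.

Lemma strip_walk_adj k i : (i < 8 * k + 12)%nat -> knight_adj (strip_walk k i) (strip_walk k (S i)).
Proof.
  intros Hi.
  destruct (strip_walk_slot k i) as [t [q [V [Ei ->]]]]; [lia |].
  destruct (strip_walk_slot k (S i)) as [t' [q' [V' [Ei' ->]]]]; [lia |].
  assert (Ht : t <> 20%nat) by (intros ->; unfold strip_slot, strip_index in *; simpl in Ei; lia).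
  unfold strip_cell, knight_adj; cbn [fst snd].
  destruct (strip_index_succ k t q t' q' V V' ltac:(lia))
    as [[-> [-> [H3 H11]]] | [[-> [[-> | ->] ->]] | [-> [[-> | ->] ->]]]];
    cbn [strip_base nth fst snd]; unfold strip_slot in V; try lia.
  do 20 (destruct t as [| t]; [cbn [strip_base nth fst snd]; lia |]); lia.
Qed.

Definition strip_row (t : nat) : Z :=
  nth t [0; 0; 0; 1; 1; 0; 0; 1; 1; 0; 0; 1; 1; 0; 0; 1; 0; 1; 1; 1] 0.

Definition strip_col (k t q : nat) : Z :=
  let M := 4 * Z.of_nat k + 6 in
  let Q := 4 * Z.of_nat q in
  nth t [0; M - 2; 2; 4;
         M - 4 - Q; 5 + Q; M - 7 - Q; M - 5 - Q; 3 + Q; M - 6 - Q; 6 + Q; 8 + Q;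
         2; M - 1; 1; 0; M - 3; M - 1; 1; M - 3] 0.

Lemma mod_eq_of_shift (c a v M : Z) : 0 <= v < M -> a = v + c * M -> a mod M = v.
Proof. intros H ->; rewrite Z.mod_add by lia; apply Z.mod_small; lia. Qed.

Lemma strip_cell_code k t q : strip_slot k t q -> (t < 20)%nat ->
  orbit_code (4 * Z.of_nat k + 6) 2 (strip_cell t q) = (strip_col k t q, strip_row t).
Proof.
  unfold strip_slot, orbit_code, klein_col, strip_cell; intros V Ht.
  destruct t as
    [|[|[|[|[|[|[|[|[|[|[|[|[|[|[|[|[|[|[|[|t]]]]]]]]]]]]]]]]]]]];
    try (exfalso; lia).
  all: cbn [strip_base nth fst snd strip_row strip_col]; simpl Z.even; cbv beta iota zeta;
    f_equal; try reflexivity;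
    first [apply (mod_eq_of_shift 0); lia | apply (mod_eq_of_shift 1); lia
          | apply (mod_eq_of_shift (-1)); lia | apply (mod_eq_of_shift (-2)); lia].
Qed.

Lemma strip_code_inj k t q t' q' : strip_slot k t q -> strip_slot k t' q' ->
  (t < 20)%nat -> (t' < 20)%nat ->
  (strip_col k t q, strip_row t) = (strip_col k t' q', strip_row t') -> t = t' /\ q = q'.
Proof.
  unfold strip_slot; intros V V' Ht Ht' [= Ecol Erow].
  destruct t as
    [|[|[|[|[|[|[|[|[|[|[|[|[|[|[|[|[|[|[|[|t]]]]]]]]]]]]]]]]]]]]; try lia;
  destruct t' as
    [|[|[|[|[|[|[|[|[|[|[|[|[|[|[|[|[|[|[|[|t']]]]]]]]]]]]]]]]]]]]; try lia;
  cbn [strip_row strip_col nth] in Ecol, Erow; lia.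
Qed.

Lemma has_right_tour_4k6_2 k : has_right_tour (4 * k + 6) 2.
Proof.
  apply has_right_tour_intro with (strip_walk k); try lia.
  - reflexivity.
  - intros i Hi; apply strip_walk_adj; lia.
  - intros i j Hi Hj.
    destruct (strip_walk_slot k i) as [t [q [V [-> ->]]]]; [lia |].
    destruct (strip_walk_slot k j) as [t' [q' [V' [-> ->]]]]; [lia |].
    assert (Hlt : forall t q, strip_slot k t q ->
                  (strip_index k t q < 8 * k + 12)%nat -> (t < 20)%nat).
    { unfold strip_slot, strip_index; intros t0 q0 V0.
      destruct (Nat.ltb_spec t0 4), (Nat.ltb_spec t0 12); lia. }
    replace (Z.of_nat (4 * k + 6)) with (4 * Z.of_nat k + 6) by lia.
    rewrite !strip_cell_code by (try eapply Hlt; eauto; lia).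
    intros [Et Eq]%strip_code_inj; try (eapply Hlt; eauto; lia); congruence.
  - destruct (strip_walk_slot k ((4 * k + 6) * 2)) as [t [q [V [Ei ->]]]]; [lia |].
    unfold strip_slot, strip_index in *.
    destruct (Nat.ltb_spec t 4), (Nat.ltb_spec t 12); try lia.
    replace t with 20%nat by lia; replace q with k by lia.
    unfold strip_cell; cbn [strip_base nth fst snd]; f_equal; lia.
Qed.

(** * Obstructions *)

Lemma knight_walk_parity (w : nat -> Z * Z) N : w 0%nat = (0, 0) ->
  (forall i, (i < N)%nat -> knight_adj (w i) (w (S i))) ->
  forall i, (i <= N)%nat -> (fst (w i) + snd (w i) - Z.of_nat i) mod 2 = 0.
Proof.
  intros H0 Hadj; induction i as [| i IH]; intros Hi.
  - now rewrite H0.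
  - specialize (IH ltac:(lia)); specialize (Hadj i ltac:(lia)).
    unfold knight_adj in Hadj; rewrite Nat2Z.inj_succ.
    Z.div_mod_to_equations; lia.
Qed.

Lemma no_cylindrical_tour_odd_even m n :
  Nat.Odd m -> Nat.Even n -> ~ has_cylindrical_tour m n.
Proof.
  intros [a ->] [b ->] [w [[H0 [Hadj _]] Hend]].
  pose proof (knight_walk_parity w _ H0 Hadj _ (le_n _)) as Hpar.
  destruct Hend as [E | E]; rewrite E in Hpar; cbn [fst snd] in Hpar;
    rewrite Nat2Z.inj_mul, Nat2Z.inj_mul in Hpar; Z.div_mod_to_equations; nia.
Qed.

Lemma orbit_code_22_short_move a b c d : Z.abs (a - c) = 1 -> Z.abs (b - d) = 2 ->
  orbit_code 2 2 (a, b) = orbit_code 2 2 (c, d).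
Proof.
  intros Hac Hbd; assert (Hd : d = b + 1 * 2 \/ d = b + -1 * 2) by lia.
  unfold orbit_code, klein_col; cbn [fst snd].
  destruct Hd as [-> | ->]; rewrite Z.mod_add, Z.div_add, Z.even_add by lia;
    destruct (Z.even (b / 2)); cbn [Z.even Bool.eqb]; f_equal; Z.div_mod_to_equations; lia.
Qed.

Lemma no_cylindrical_tour_22 : ~ has_cylindrical_tour 2 2.
Proof.
  intros [w [[H0 [Hadj [Hdist [_ Hret]]]] Hend]].
  assert (Hlong : forall i, (i < 4)%nat -> Z.abs (fst (w i) - fst (w (S i))) = 2).
  { intros i Hi; destruct (Hadj i Hi) as [[Hx Hy] | [Hx _]]; trivial; exfalso.
    destruct (w i) as [a b] eqn:Ei, (w (S i)) as [c d] eqn:ESi.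
    pose proof (orbit_code_22_short_move a b c d Hx Hy) as Ecode.
    apply same_orbit_iff_code in Ecode; try lia; rewrite <- Ei, <- ESi in Ecode.
    destruct (Nat.eq_dec (S i) 4) as [E4 | Hne].
    - rewrite E4 in Ecode; apply (rst_trans _ _ _ _ _ Ecode) in Hret.
      specialize (Hdist i 0%nat Hi ltac:(lia) Hret); lia.
    - specialize (Hdist i (S i) Hi ltac:(lia) Ecode); lia. }
  pose proof (Hlong 0%nat); pose proof (Hlong 1%nat); pose proof (Hlong 2%nat);
    pose proof (Hlong 3%nat).
  simpl in Hend; rewrite H0 in *; destruct Hend as [E | E]; rewrite E in *; cbn [fst] in *; lia.
Qed.

Lemma has_right_tour_of_conditions (m n : nat) :
  (0 < m)%nat -> (0 < n)%nat -> (1 < m \/ 1 < n)%nat ->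
  ~ (m = 2%nat /\ n = 2%nat) -> ~ (Nat.Odd m /\ Nat.Even n) -> has_right_tour m n.
Proof.
  intros Hm Hn H1 N22 Nodd.
  destruct (Nat.Even_or_Odd n) as [[b ->] | [h ->]].
  - destruct (Nat.Even_or_Odd m) as [[K ->] | Hodd];
      [| exfalso; apply Nodd; split; trivial; now exists b].
    destruct (Nat.eq_dec b 1) as [-> | Hb].
    + destruct (Nat.Even_or_Odd K) as [[j ->] | [j ->]].
      * replace (2 * (2 * j))%nat with (j * 4)%nat by lia.
        apply has_right_tour_repeat; try lia; exact has_right_tour_4_2.
      * replace (2 * (2 * j + 1))%nat with (4 * (j - 1) + 6)%nat by lia.
        apply has_right_tour_4k6_2.
    + rewrite Nat.mul_comm; apply has_right_tour_repeat; try lia.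
      apply has_right_tour_2_n; lia.
  - destruct (Nat.eq_dec h 0) as [-> | Hh].
    + destruct (Nat.Even_or_Odd m) as [[K ->] | [a ->]].
      * rewrite Nat.mul_comm; apply has_right_tour_repeat; try lia; exact has_right_tour_2_1.
      * replace (2 * a + 1)%nat with (2 * (a - 1) + 3)%nat by lia.
        apply has_right_tour_odd_1.
    + rewrite <- (Nat.mul_1_r m); apply has_right_tour_repeat; try lia.
      apply has_right_tour_1_odd; lia.
Qed.

Theorem theorem6p2 (m n : nat) :
  (0 < m)%nat -> (0 < n)%nat -> (1 < m \/ 1 < n)%nat ->
  (has_cylindrical_tour m n <->
     ~ (m = 2%nat /\ n = 2%nat) /\ ~ (Nat.Odd m /\ Nat.Even n)).
Proof.
  intros Hm Hn H1; split.
  - intros T; split.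
    + intros [-> ->]; exact (no_cylindrical_tour_22 T).
    + intros [Ho He]; exact (no_cylindrical_tour_odd_even m n Ho He T).
  - intros [N22 Nodd]; apply has_right_tour_cylindrical.
    now apply has_right_tour_of_conditions.
Qed.
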